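(* Let $G$ be a connected diamond-free graph. Then $G$ is CIS if and only if one of the following holds: (i) $G$ is clique simplicial; (ii) $G\cong K_{m,n}$ for some integers $m,n\ge 2$; (iii) $G\cong L(K_{n,n})$ for some integer $n\ge 3$.
   Context: All graphs are finite, simple and undirected. A clique is a set of pairwise adjacent vertices, a stable set a set of pairwise non-adjacent vertices; ''maximal'' means inclusion-maximal. A clique is strong if it intersects every maximal stable set. A graph is CIS if every maximal clique is strong (equivalently, every maximal clique intersects every maximal stable set). The diamond is $K_4$ minus one edge; a graph is diamond-free if it has no induced subgraph isomorphic to the diamond. A vertex $v$ is simplicial if its closed neighborhood $N[v]=N(v)\cup\{v\}$ is a clique; a clique is simplicial if it equals $N[v]$ for some simplicial vertex $v$ (such a clique is maximal). A graph is clique simplicial if every maximal clique is simplicial. $K_{m,n}$ is the complete bipartite graph with parts of sizes $m,n$; $L(H)$ denotes the line graph of $H$. *)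

From mathcomp Require Import all_boot.
Set Implicit Arguments. Unset Strict Implicit. Unset Printing Implicit Defensive.

Section Graphs.
Variables (T : finType) (e : rel T).

Definition simple_graph : Prop := symmetric e /\ irreflexive e.

Definition connected_graph : Prop :=
  0 < #|T| /\ forall x y : T, connect e x y.

Definition is_clique (A : {set T}) : bool :=
  [forall x in A, forall y in A, (x != y) ==> e x y].

Definition is_stable (A : {set T}) : bool :=
  [forall x in A, forall y in A, ~~ e x y].

Definition maximal_clique (A : {set T}) : bool := maxset is_clique A.
Definition maximal_stable (A : {set T}) : bool := maxset is_stable A.

Definition CIS : Prop :=
  forall C S : {set T}, maximal_clique C -> maximal_stable S -> C :&: S != set0.

Definition cnbhd (v : T) : {set T} := v |: [set u | e v u].

Definition simplicial_vertex (v : T) : bool := is_clique (cnbhd v).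

Definition simplicial_clique (C : {set T}) : bool :=
  [exists v, simplicial_vertex v && (C == cnbhd v)].

Definition clique_simplicial : Prop :=
  forall C : {set T}, maximal_clique C -> simplicial_clique C.

Definition diamond_free : Prop :=
  ~ exists a b c d : T,
      [/\ uniq [:: a; b; c; d],
          [&& e a b, e a c, e a d, e b c & e b d] & ~~ e c d].

Definition is_edge (E : {set T}) : bool :=
  [exists x, exists y, e x y && (E == [set x; y])].

End Graphs.

Definition isomorphic (T U : finType) (e : rel T) (f : rel U) : Prop :=
  exists g : T -> U, bijective g /\ forall x y, e x y = f (g x) (g y).

Definition Kmn_rel (m n : nat) : rel ('I_m + 'I_n)%type :=
  fun x y => match x, y with
             | inl _, inr _ | inr _, inl _ => true
             | _, _ => false
             end.

Definition line_vertex (T : finType) (e : rel T) := {E : {set T} | is_edge e E}.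

Definition line_rel (T : finType) (e : rel T) : rel (line_vertex e) :=
  fun E F => (E != F) && (val E :&: val F != set0).

Arguments Kmn_rel : clear implicits.

From mathcomp Require Import all_boot.
From mathcomp Require Import zify.
Set Implicit Arguments. Unset Strict Implicit. Unset Printing Implicit Defensive.

(* Converse direction: a clique simplicial graph is CIS, because a maximal
   stable set meets N[v] for every vertex v; K_{m,n} and L(K_{n,n}) are CIS by
   a direct check, and CIS is invariant under isomorphism.

   Main direction: let G be connected, diamond-free, CIS and not clique
   simplicial.  Diamond-freeness says that a vertex outside a maximal clique
   sees at most one of its vertices; CIS says that no stable set avoiding a
   maximal clique dominates it.  From these two facts we derive successively:
   G has no simplicial vertex at all; every maximal clique dominates G; every
   maximal clique has at least two vertices; and, when some maximal clique has
   three or more vertices, every vertex lies in exactly two maximal cliques.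
   If a maximal clique {a, b} has two vertices, N(a) and N(b) are the sides of
   a complete bipartite graph K_{m,n} with m, n >= 2.  Otherwise, fixing two
   maximal cliques C, D through a common vertex, sending u to its pair of
   "feet" in D and in C (its unique neighbour there, or u itself) is an
   isomorphism from G onto the line graph of K_{|C|,|C|}. *)

Lemma inj_surj_bij (A B : finType) (g : A -> B) :
  injective g -> (forall y, exists x, g x = y) -> bijective g.
Proof.
move=> ig sg; apply: inj_card_bij => //.
rewrite -(card_codom ig); apply: subset_leq_card; apply/subsetP => y _.
by case: (sg y) => x <-; apply: codom_f.
Qed.

Lemma third_element (T : finType) (A : {set T}) x y :
  2 < #|A| -> exists2 z, z \in A & (z != x) && (z != y).
Proof.
move=> c3.
have : 0 < #|A :\ x :\ y|.
  move: c3; rewrite (cardsD1 x A) (cardsD1 y (A :\ x)).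
  by case: (x \in A); case: (y \in A :\ x) => /=; lia.
case/card_gt0P => z; rewrite !inE => /and3P [zy zx zA].
by exists z; rewrite ?zx ?zy.
Qed.

(* The vertices of L(K_{n,n}) are the edges {inl i, inr j}, written kedge i j;
   two of them are adjacent iff they share exactly one coordinate. *)
Section LineKnn.
Variable n : nat.

Definition knn_edge := line_vertex (Kmn_rel n n).

Lemma kedge_proof (i j : 'I_n) : is_edge (Kmn_rel n n) [set inl i; inr j].
Proof. by apply/existsP; exists (inl i); apply/existsP; exists (inr j); rewrite eqxx. Qed.

Definition kedge (i j : 'I_n) : knn_edge := exist _ [set inl i; inr j] (kedge_proof i j).

Lemma kedge_surj (E : knn_edge) : exists i j, E = kedge i j.
Proof.
have := valP E; move=> /existsP [x /existsP [y /andP [kxy /eqP EA]]].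
case: x kxy EA => [i | j]; case: y => [i' | j'] //= _ EA.
  by exists i, j'; apply: val_inj; rewrite /= EA.
by exists i', j; apply: val_inj; rewrite /= EA setUC.
Qed.

Lemma kedge_inj i j i' j' : kedge i j = kedge i' j' -> i = i' /\ j = j'.
Proof.
move=> /(congr1 val) /= E; split.
  move/setP: E => /(_ (inl i)); rewrite !inE eqxx /= => /esym /orP [/eqP [] // | /eqP //].
by move/setP: E => /(_ (inr j)); rewrite !inE eqxx orbT /= => /esym /eqP [].
Qed.

Lemma line_rel_kedge i j i' j' : line_rel (kedge i j) (kedge i' j') =
  ((i != i') || (j != j')) && ((i == i') || (j == j')).
Proof.
rewrite /line_rel; congr andb.
  apply/idP/idP.
    apply: contraR; rewrite negb_or !negbK => /andP [/eqP-> /eqP->]; by rewrite eqxx.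
  apply: contraL => /eqP /kedge_inj [-> ->]; by rewrite !eqxx.
apply/set0Pn/idP.
  case=> x; rewrite !inE => /andP [] /orP [] /eqP -> /orP [] /eqP //= [] ->;
    by rewrite eqxx ?orbT.
case/orP => /eqP ->.
  by exists (inl i'); rewrite !inE eqxx.
by exists (inr j'); rewrite !inE eqxx !orbT.
Qed.

End LineKnn.

Section Graph.
Variables (T : finType) (e : rel T).
Hypothesis esym : symmetric e.
Hypothesis eirr : irreflexive e.

Lemma cliqueP (A : {set T}) :
  reflect (forall x y, x \in A -> y \in A -> x != y -> e x y) (is_clique e A).
Proof.
apply: (iffP forallP) => [H x y xA yA nxy | H x].
  by move: (H x); rewrite xA /= => /forallP /(_ y); rewrite yA /= nxy.
by apply/implyP => xA; apply/forallP => y; apply/implyP => yA; apply/implyP; apply: H.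
Qed.

Lemma stableP (A : {set T}) :
  reflect (forall x y, x \in A -> y \in A -> ~~ e x y) (is_stable e A).
Proof.
apply: (iffP forallP) => [H x y xA yA | H x].
  by move: (H x); rewrite xA /= => /forallP /(_ y); rewrite yA.
by apply/implyP => xA; apply/forallP => y; apply/implyP => yA; apply: H.
Qed.

Lemma maxcliqueP C :
  reflect (is_clique e C /\ forall B, is_clique e B -> C \subset B -> B = C)
          (maximal_clique e C).
Proof. exact: maxsetP. Qed.

Lemma maxstableP S :
  reflect (is_stable e S /\ forall B, is_stable e B -> S \subset B -> B = S)
          (maximal_stable e S).
Proof. exact: maxsetP. Qed.

Lemma mc_clique C : maximal_clique e C -> is_clique e C.
Proof. by case/maxcliqueP. Qed.

Lemma mc_adj C x y : maximal_clique e C -> x \in C -> y \in C -> x != y -> e x y.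
Proof. by move/mc_clique/cliqueP; apply. Qed.

Lemma ms_stable S : maximal_stable e S -> is_stable e S.
Proof. by case/maxstableP. Qed.

Lemma ms_nadj S x y : maximal_stable e S -> x \in S -> y \in S -> ~~ e x y.
Proof. by move/ms_stable/stableP; apply. Qed.

Lemma adj_neq x y : e x y -> x != y.
Proof. by apply: contraTneq => ->; rewrite eirr. Qed.

Lemma clique1 x : is_clique e [set x].
Proof. by apply/cliqueP => a b; rewrite !inE => /eqP-> /eqP->; rewrite eqxx. Qed.

Lemma clique2 x y : e x y -> is_clique e [set x; y].
Proof.
move=> exy; apply/cliqueP => a b; rewrite !inE => /orP [] /eqP-> /orP [] /eqP->;
  rewrite ?eqxx //= => _; by rewrite // esym.
Qed.

Lemma stable1 x : is_stable e [set x].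
Proof. by apply/stableP => a b; rewrite !inE => /eqP-> /eqP->; rewrite eirr. Qed.

Lemma stable2 x y : ~~ e x y -> is_stable e [set x; y].
Proof.
move=> nxy; apply/stableP => a b; rewrite !inE => /orP [] /eqP-> /orP [] /eqP->;
  by rewrite ?eirr // esym.
Qed.

Lemma maxclique_exists (A : {set T}) :
  is_clique e A -> exists2 C, maximal_clique e C & A \subset C.
Proof. by move=> cA; case: (maxset_exists cA) => C mC sAC; exists C. Qed.

Lemma maxstable_exists (A : {set T}) :
  is_stable e A -> exists2 S, maximal_stable e S & A \subset S.
Proof. by move=> cA; case: (maxset_exists cA) => C mC sAC; exists C. Qed.

Lemma maxstable_through v : exists2 S, maximal_stable e S & v \in S.
Proof.
case: (maxstable_exists (stable1 v)) => S mS sub.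
by exists S; rewrite // (subsetP sub) ?inE.
Qed.

Lemma edge_maxclique x y : e x y ->
  exists2 C, maximal_clique e C & (x \in C) && (y \in C).
Proof.
move=> exy; case: (maxclique_exists (clique2 exy)) => C mC sub; exists C => //.
by rewrite !(subsetP sub) // !inE eqxx ?orbT.
Qed.

Lemma maxclique_nonempty C : 0 < #|T| -> maximal_clique e C -> exists x, x \in C.
Proof.
case/card_gt0P => z _ mC; apply/set0Pn; apply/negP => /eqP C0.
move/maxcliqueP: mC => [_ /(_ [set z] (clique1 z))].
by rewrite C0 sub0set => /(_ isT) /setP /(_ z); rewrite !inE eqxx.
Qed.

Lemma maxclique_nonnbr C u : maximal_clique e C -> u \notin C ->
  exists2 z, z \in C & ~~ e u z.
Proof.
move=> /maxcliqueP [cC mC] uC.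
case: (boolP [forall z in C, e u z]) => [/forallP H | ]; last first.
  rewrite negb_forall => /existsP [z]; rewrite negb_imply => /andP [zC nuz].
  by exists z.
have cB : is_clique e (u |: C).
  apply/cliqueP => x y; rewrite !inE => /orP [/eqP-> | xC] /orP [/eqP-> | yC].
  - by rewrite eqxx.
  - by move=> _; move: (H y); rewrite yC.
  - by move=> _; move: (H x); rewrite xC /= esym.
  - by move/cliqueP: cC; apply.
by move: uC; rewrite -(mC _ cB (subsetUr _ _)) !inE eqxx.
Qed.

Lemma maxstable_dominating S y : maximal_stable e S -> y \notin S ->
  exists2 s, s \in S & e y s.
Proof.
move=> /maxstableP [sS mS] yS.
case: (boolP [exists s in S, e y s]) => [/existsP [s /andP [sS' eys]] | ].
  by exists s.
rewrite negb_exists => /forallP H.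
have sB : is_stable e (y |: S).
  apply/stableP => a b; rewrite !inE => /orP [/eqP-> | aS] /orP [/eqP-> | bS].
  - by rewrite eirr.
  - by move: (H b); rewrite bS.
  - by move: (H a); rewrite aS /= esym.
  - by move/stableP: sS; apply.
by move: yS; rewrite -(mS _ sB (subsetUr _ _)) !inE eqxx.
Qed.

Lemma clique_stable_meet C S x y : maximal_clique e C -> maximal_stable e S ->
  x \in C -> x \in S -> y \in C -> y \in S -> x = y.
Proof.
move=> mC mS xC xS yC yS; apply/eqP/negPn/negP => nxy.
by move: (ms_nadj mS xS yS); rewrite (mc_adj mC xC yC nxy).
Qed.

Lemma simplicial_maxclique C v : maximal_clique e C -> v \in C ->
  simplicial_vertex e v -> C = cnbhd e v.
Proof.
move=> mC vC sv.
have sub : C \subset cnbhd e v.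
  apply/subsetP => c cC; rewrite /cnbhd !inE.
  case: (boolP (c == v)) => [/eqP-> | ncv]; first done.
  by rewrite (mc_adj mC vC cC) ?orbT // eq_sym.
by case/maxcliqueP: mC => _ /(_ _ sv sub) ->.
Qed.

Lemma nbr_outside x L : maximal_clique e L -> x \in L ->
  ~~ simplicial_vertex e x -> exists2 s, e x s & s \notin L.
Proof.
move=> mL xL nsx.
case: (boolP [exists s, e x s && (s \notin L)]) => [/existsP [s /andP [H1 H2]] | ].
  by exists s.
rewrite negb_exists => /forallP H; exfalso; move/negP: nsx; apply.
have inL y : (y == x) || e x y -> y \in L.
  by case/orP => [/eqP-> // | exy]; move: (H y); rewrite exy /= => /negPn.
apply/cliqueP => a b; rewrite /cnbhd !inE => /inL aL /inL bL nab.
exact: mc_adj mL aL bL nab.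
Qed.

Lemma connected_spread (P : pred T) x0 v : connected_graph e ->
  (forall x y, e x y -> P x -> P y) -> P x0 -> P v.
Proof.
move=> [_ conn] step Px0.
have clP : closed e P.
  by move=> x y exy; apply/idP/idP; apply: step; rewrite // esym.
by have := closed_connect clP (conn x0 v); rewrite !unfold_in => <-.
Qed.


Lemma stable_other_notin C S v p : maximal_clique e C -> maximal_stable e S ->
  v \in C -> v \in S -> p \in S -> p != v -> p \notin C.
Proof.
move=> mC mS vC vS pS; apply: contra => pC; apply/eqP.
exact: (clique_stable_meet mC mS pC pS vC vS).
Qed.

Lemma clique_other_notin C S v u : maximal_clique e C -> maximal_stable e S ->
  v \in C -> v \in S -> u \in C -> u != v -> u \notin S.
Proof.
move=> mC mS vC vS uC; apply: contra => uS; apply/eqP.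
exact: (clique_stable_meet mC mS uC uS vC vS).
Qed.

Section DiamondFree.
Hypothesis dfree : diamond_free e.

Lemma one_nbr_in_maxclique C u x y : maximal_clique e C -> u \notin C ->
  x \in C -> y \in C -> e u x -> e u y -> x = y.
Proof.
move=> mC uC xC yC eux euy; apply/eqP; apply/negPn/negP => nxy.
case: (maxclique_nonnbr mC uC) => z zC nuz.
have xz : x != z by apply: contraNneq nuz => <-.
have yz : y != z by apply: contraNneq nuz => <-.
apply: dfree; exists x, y, u, z; split => //.
- have xu : x != u by apply: contraNneq uC => <-.
  have yu : y != u by apply: contraNneq uC => <-.
  have uz : u != z by apply: contraNneq uC => ->.
  by rewrite /= !inE !negb_or nxy xz yz xu yu uz.
- by rewrite (mc_adj mC xC yC nxy) (mc_adj mC xC zC xz) (mc_adj mC yC zC yz)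
     esym eux esym euy.
Qed.

Lemma maxclique_eq C D x y : maximal_clique e C -> maximal_clique e D ->
  x \in C -> x \in D -> y \in C -> y \in D -> x != y -> C = D.
Proof.
move=> mC mD xC xD yC yD nxy.
have sDC : D \subset C.
  apply/subsetP => d dD; apply/negPn/negP => dC.
  have dx : d != x by apply: contraNneq dC => ->.
  have dy : d != y by apply: contraNneq dC => ->.
  move: (one_nbr_in_maxclique mC dC xC yC (mc_adj mD dD xD dx) (mc_adj mD dD yD dy)).
  by move/eqP; rewrite (negbTE nxy).
by case/maxcliqueP: mD => _ /(_ C (mc_clique mC) sDC).
Qed.

Lemma maxclique_meet C D x y : maximal_clique e C -> maximal_clique e D -> C != D ->
  x \in C -> x \in D -> y \in C -> y \in D -> x = y.
Proof.
move=> mC mD nCD xC xD yC yD; apply/eqP/negPn/negP => nxy.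
by move: nCD; rewrite (maxclique_eq mC mD xC xD yC yD nxy) eqxx.
Qed.

Lemma maxclique_other_notin C N v w : maximal_clique e C -> maximal_clique e N ->
  N != C -> v \in C -> v \in N -> w \in N -> w != v -> w \notin C.
Proof.
move=> mC mN nNC vC vN wN wv; apply: contra wv => wC; apply/eqP.
exact: (maxclique_meet mN mC nNC wN wC vN vC).
Qed.

Lemma common_nbr_in L u u' x : maximal_clique e L -> u \in L -> u' \in L -> u != u' ->
  e u x -> e u' x -> x \in L.
Proof.
move=> mL uL u'L uu' eux eu'x; apply: contraNT uu' => xL; apply/eqP.
by apply: (one_nbr_in_maxclique mL xL uL u'L); rewrite esym.
Qed.

Lemma profile_nbr_unique S v C u u' s : maximal_stable e S -> v \in S ->
  maximal_clique e C -> v \in C -> u \in C -> u' \in C -> s \in S -> s != v ->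
  e u s -> e u' s -> u = u'.
Proof.
move=> mS vS mC vC uC u'C sS sv eus eu's.
have sC := stable_other_notin mC mS vC vS sS sv.
by apply: (one_nbr_in_maxclique mC sC uC u'C); rewrite esym.
Qed.

Section CISDiamondFree.
Hypothesis cis : CIS e.

Lemma cis_meet C S : maximal_clique e C -> maximal_stable e S ->
  exists2 x, x \in C & x \in S.
Proof. by move=> mC mS; case/set0Pn: (cis mC mS) => x /setIP [xC xS]; exists x. Qed.

(* The CIS property in the form used throughout: no stable set avoiding a
   maximal clique C dominates C (it would extend to a maximal stable set
   missing C). *)
Lemma no_dominating_stable (X C : {set T}) : is_stable e X -> maximal_clique e C ->
  (forall x, x \in X -> x \notin C) ->
  (forall c, c \in C -> exists2 x, x \in X & e c x) -> False.
Proof.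
move=> sX mC disj dom.
case: (maxstable_exists sX) => S mS sXS.
case: (cis_meet mC mS) => c cC cS.
case: (dom c cC) => x xX ecx.
by move: (ms_nadj mS cS (subsetP sXS x xX)); rewrite ecx.
Qed.

(* A vertex outside a maximal stable set S with a single neighbour v in S is
   simplicial: all its maximal cliques meet S, hence contain v, hence coincide. *)
Lemma unique_nbr_simplicial S y v : maximal_stable e S -> y \notin S -> v \in S ->
  e y v -> (forall s, s \in S -> e y s -> s = v) -> simplicial_vertex e y.
Proof.
move=> mS yS vS eyv Hs.
case: (edge_maxclique eyv) => L mL /andP [yL vL].
have sub : cnbhd e y \subset L.
  apply/subsetP => z; rewrite !inE => /orP [/eqP-> // | eyz].
  case: (edge_maxclique eyz) => M mM /andP [yM zM].
  case: (cis_meet mM mS) => s sM sS.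
  have sy : s != y by apply: contraNneq yS => <-.
  have eys : e y s by rewrite (mc_adj mM yM sM) // eq_sym.
  have sv := Hs s sS eys; subst s.
  have yv : y != v by apply: contraNneq yS => ->.
  by rewrite (maxclique_eq mL mM yL yM vL sM yv).
apply/cliqueP => a b aN bN nab.
exact: (mc_adj mL (subsetP sub a aN) (subsetP sub b bN) nab).
Qed.

Lemma second_stable_nbr S y v : maximal_stable e S -> y \notin S -> v \in S ->
  ~~ simplicial_vertex e y -> exists2 s, s \in S & e y s && (s != v).
Proof.
move=> mS yS vS ns.
case: (boolP [exists s in S, e y s && (s != v)]) => [/existsP [s /andP [sS' H]] | ].
  by exists s.
rewrite negb_exists => /forallP H.
have only_v s : s \in S -> e y s -> s = v.
  by move=> sS eys; apply/eqP; move: (H s); rewrite sS eys /= => /negPn.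
case: (maxstable_dominating mS yS) => s sS eys.
have sv := only_v s sS eys; subst s.
by move: ns; rewrite (unique_nbr_simplicial mS yS vS eys only_v).
Qed.

Definition nonsimplicial_set (C : {set T}) := [forall v in C, ~~ simplicial_vertex e v].

Lemma nonsimplicial_nbr C v x : maximal_clique e C -> nonsimplicial_set C ->
  v \in C -> x \notin C -> e v x -> ~~ simplicial_vertex e x.
Proof.
move=> mC gC vC xC evx; apply/negP => sx.
case: (maxstable_through v) => S mS vS.
have xS s : s \in S -> s != v -> ~~ e x s.
  move=> sS nsv; apply/negP => exs.
  have : e s v.
    by move/cliqueP: sx; apply; rewrite ?inE ?eqxx ?exs ?orbT // esym evx orbT.
  by rewrite (negbTE (ms_nadj mS sS vS)).
apply: (no_dominating_stable (X := x |: (S :\ v)) _ mC).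
- apply/stableP => a b; rewrite !inE.
  move=> /orP [/eqP-> | /andP [nav aS]] /orP [/eqP-> | /andP [nbv bS]].
  + by rewrite eirr.
  + exact: xS.
  + by rewrite esym; apply: xS.
  + exact: ms_nadj mS aS bS.
- move=> y; rewrite !inE => /orP [/eqP-> // | /andP [nyv yS]].
  exact: (stable_other_notin mC mS vC vS yS nyv).
- move=> c cC; case: (eqVneq c v) => [-> | ncv]; first by exists x; rewrite ?inE ?eqxx.
  have cS := clique_other_notin mC mS vC vS cC ncv.
  have nsc : ~~ simplicial_vertex e c by move/forallP: gC => /(_ c); rewrite cC.
  case: (second_stable_nbr mS cS vS nsc) => s sS /andP [ecs nsv].
  by exists s; rewrite // !inE sS nsv orbT.
Qed.

Lemma nonsimplicial_spread C D u : maximal_clique e C -> maximal_clique e D ->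
  nonsimplicial_set C -> u \in C -> u \in D -> nonsimplicial_set D.
Proof.
move=> mC mD gC uC uD; apply/forallP => y; apply/implyP => yD.
case: (boolP (y \in C)) => [yC | yC]; first by move/forallP: gC => /(_ y); rewrite yC.
have uy : u != y by apply: contraNneq yC => <-.
exact: (nonsimplicial_nbr mC gC uC yC (mc_adj mD uD yD uy)).
Qed.

(* Fix a maximal stable set S and v in S; the profile of a vertex
   is its set of neighbours in S other than v.  If M, M' are distinct maximal
   cliques through v, every y in M' - v has a "shadow" z in M - v whose profile
   is contained in that of y (otherwise y together with the part of S - v
   missed by y would dominate M). *)
Lemma profile_shadow S v M M' y : maximal_stable e S -> v \in S ->
  maximal_clique e M -> maximal_clique e M' -> M != M' -> v \in M -> v \in M' ->
  y \in M' -> y != v ->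
  exists2 z, (z \in M) && (z != v) &
    (forall s, s \in S -> s != v -> e z s -> e y s).
Proof.
move=> mS vS mM mM' nMM' vM vM' yM' yv.
case: (boolP [exists z, [&& z \in M, z != v &
          [forall s, (s \in S) ==> (s != v) ==> e z s ==> e y s]]]).
  case/existsP => z /and3P [zM zv /forallP H]; exists z; first by rewrite zM.
  by move=> s sS sv ezs; move: (H s); rewrite sS sv ezs.
rewrite negb_exists => /forallP H; exfalso.
have nM'M : M' != M by rewrite eq_sym.
have yM := maxclique_other_notin mM mM' nM'M vM vM' yM' yv.
apply: (no_dominating_stable (X := y |: [set c in S | (c != v) && ~~ e y c]) _ mM).
- apply/stableP => a b; rewrite !inE => /orP [/eqP-> | /andP [aS /andP [av nya]]]
     /orP [/eqP-> | /andP [bS /andP [bv nyb]]].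
  + by rewrite eirr.
  + exact: nyb.
  + by rewrite esym.
  + exact: ms_nadj mS aS bS.
- move=> x; rewrite !inE => /orP [/eqP-> // | /andP [xS /andP [xv _]]].
  exact: (stable_other_notin mM mS vM vS xS xv).
- move=> c cM; case: (eqVneq c v) => [-> | cv].
    exists y; first by rewrite !inE eqxx.
    by rewrite (mc_adj mM' vM' yM') // eq_sym.
  move: (H c); rewrite cM cv /= negb_forall => /existsP [s].
  rewrite !negb_imply => /and4P [sS sv ecs nys].
  by exists s; rewrite // !inE sS sv nys orbT.
Qed.

Section NoSimplicial.
Hypothesis conn : connected_graph e.
Hypothesis ncs : ~ clique_simplicial e.

(* Step 1: G has no simplicial vertex.  Some maximal clique is not simplicial,
   hence has no simplicial vertex, and this spreads along edges. *)
Lemma no_simplicial v : ~~ simplicial_vertex e v.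
Proof.
have [C0 mC0 gC0] : exists2 C, maximal_clique e C & nonsimplicial_set C.
  case: (boolP [exists C, maximal_clique e C && ~~ simplicial_clique e C]).
    case/existsP => C /andP [mC nsC]; exists C => //.
    apply/forallP => v'; apply/implyP => v'C; apply/negP => sv'.
    move/negP: nsC; apply; apply/existsP; exists v'.
    by rewrite sv' /= (simplicial_maxclique mC v'C sv') eqxx.
  rewrite negb_exists => /forallP H; exfalso; apply: ncs => C mC.
  by move: (H C); rewrite mC /= negbK.
pose P := [pred z | [exists C, [&& maximal_clique e C, z \in C & nonsimplicial_set C]]].
have [x0 x0C0] := maxclique_nonempty conn.1 mC0.
have : P v.
  apply: (connected_spread (x0 := x0)) => //; last first.
    by apply/existsP; exists C0; rewrite mC0 x0C0 gC0.
  move=> x y exy /existsP [C /and3P [mC xC gC]].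
  case: (edge_maxclique exy) => D mD /andP [xD yD].
  by apply/existsP; exists D; rewrite mD yD (nonsimplicial_spread mC mD gC xC xD).
case/existsP => C /and3P [mC vC /forallP /(_ v)].
by rewrite vC.
Qed.

Lemma profile_nonempty S v N w : maximal_stable e S -> v \in S ->
  maximal_clique e N -> v \in N -> w \in N -> w != v ->
  exists2 s, s \in S & e w s && (s != v).
Proof.
move=> mS vS mN vN wN wv.
exact: (second_stable_nbr mS (clique_other_notin mN mS vN vS wN wv) vS (no_simplicial w)).
Qed.

(* Take the
   shadow u of w in C and the shadow w' of u in N; w' and w share a
   neighbour of S - v, so w' = w. *)
Lemma profile_twin S v C N w : maximal_stable e S -> v \in S ->
  maximal_clique e C -> maximal_clique e N -> C != N -> v \in C -> v \in N ->
  w \in N -> w != v ->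
  exists2 u, (u \in C) && (u != v) & (forall s, s \in S -> s != v -> e w s = e u s).
Proof.
move=> mS vS mC mN nCN vC vN wN wv.
case: (profile_shadow mS vS mC mN nCN vC vN wN wv) => u /andP [uC uv] Hu.
have nNC : N != C by rewrite eq_sym.
case: (profile_shadow mS vS mN mC nNC vN vC uC uv) => w' /andP [w'N w'v] Hw'.
case: (profile_nonempty mS vS mN vN w'N w'v) => s0 s0S /andP [ew's0 s0v].
have ews0 := Hu s0 s0S s0v (Hw' s0 s0S s0v ew's0).
have w'w := profile_nbr_unique mS vS mN vN w'N wN s0S s0v ew's0 ews0.
subst w'; exists u; first by rewrite uC uv.
by move=> s sS sv; apply/idP/idP; [exact: Hw' | exact: Hu].
Qed.

(* A vertex u with no neighbour
   in L cannot have a neighbour w adjacent to some l in L: with S a maximal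
   stable set through u and l, the twin of w in L would be adjacent to u. *)
Lemma no_distance_two L u w l : maximal_clique e L -> u \notin L ->
  (forall x, x \in L -> ~~ e u x) -> e u w -> l \in L -> e w l -> False.
Proof.
move=> mL uL Hu euw lL ewl.
case: (maxstable_exists (stable2 (Hu l lL))) => S mS sub.
have uS : u \in S by rewrite (subsetP sub) // !inE eqxx.
have lS : l \in S by rewrite (subsetP sub) // !inE eqxx orbT.
have wL : w \notin L by apply: contraL euw => /Hu.
case: (edge_maxclique ewl) => M mM /andP [wM lM].
have nLM : L != M by apply: contraNneq wL => ->.
have wl : w != l by apply: contraNneq wL => ->.
case: (profile_twin mS lS mL mM nLM lL lM wM wl) => z /andP [zL _] Hz.
have ul : u != l by apply: contraNneq uL => ->.
by move: (Hu z zL); rewrite esym -Hz // esym euw.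
Qed.

Lemma maxclique_dominating L u : maximal_clique e L -> u \notin L ->
  exists2 l, l \in L & e u l.
Proof.
move=> mL uL.
pose B := [pred x | (x \in L) || [exists l in L, e x l]].
have [x0 x0L] := maxclique_nonempty conn.1 mL.
have : B u.
  apply: (connected_spread (x0 := x0)) => //=; last by rewrite x0L.
  move=> x y exy /orP [xL | /existsP [l /andP [lL exl]]].
    by apply/orP; right; apply/existsP; exists x; rewrite xL esym.
  case: (boolP (y \in L)) => //= yL.
  case: (boolP [exists l in L, e y l]) => //; rewrite negb_exists => /forallP H; exfalso.
  apply: (no_distance_two mL yL _ _ lL exl); last by rewrite esym.
  by move=> z zL; move: (H z); rewrite zL.
by rewrite /= (negbTE uL) => /existsP [l /andP [lL eul]]; exists l.
Qed.

Lemma maxclique_ge2 C : maximal_clique e C -> 1 < #|C|.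
Proof.
move=> mC; have [x xC] := maxclique_nonempty conn.1 mC.
case: (nbr_outside mC xC (no_simplicial x)) => s exs sC.
case: (ltnP 1 #|C|) => // small; exfalso.
have sub : C \subset [set x; s].
  apply/subsetP => y yC; rewrite !inE; apply/orP; left.
  by move/card_le1P: small => /(_ x xC y); rewrite yC inE => <-.
move/maxcliqueP: mC => [_ /(_ _ (clique2 exs) sub)] E.
by move: sC; rewrite -E !inE eqxx orbT.
Qed.

(* Otherwise L = {v, x}, and
   for a neighbour s of x outside L and a vertex w of C - v not adjacent to s,
   the stable set {w, s} would dominate L. *)
Lemma big_clique_spread C L v : maximal_clique e C -> 2 < #|C| -> v \in C ->
  maximal_clique e L -> v \in L -> L != C -> 2 < #|L|.
Proof.
move=> mC c3 vC mL vL nLC.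
have nCL : C != L by rewrite eq_sym.
have [x xL xC] : exists2 x, x \in L & x \notin C.
  case: (boolP (L \subset C)) => [sLC | /subsetPn [x xL xC]]; last by exists x.
  by case/maxcliqueP: mL => _ /(_ C (mc_clique mC) sLC) E; rewrite E eqxx in nLC.
have xv : x != v by apply: contraNneq xC => ->.
rewrite ltnNge; apply/negP => small.
have Lvx y : y \in L -> (y == v) || (y == x).
  move=> yL; apply/negP => /negP; rewrite negb_or => /andP [yv yx].
  move: small; rewrite leqNgt => /negP; apply; apply/card_gt2P; exists v, x, y.
  by split; split; rewrite // ?(eq_sym v) // eq_sym.
case: (nbr_outside mL xL (no_simplicial x)) => s exs sL.
have nsv : ~~ e s v.
  apply: contra xv => esv; apply/eqP.
  by apply: (one_nbr_in_maxclique mL sL xL vL); rewrite // esym.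
have sC : s \notin C.
  apply: contra nsv => sC; apply: (mc_adj mC sC vC).
  by apply: contraNneq sL => ->.
case: (maxclique_dominating mC sC) => t tC est.
case: (third_element v t c3) => w wC /andP [wv wt].
have nsw : ~~ e s w.
  by apply: contra wt => esw; apply/eqP; apply: (one_nbr_in_maxclique mC sC).
have wL := maxclique_other_notin mL mC nCL vL vC wC wv.
have nwx : ~~ e w x.
  apply: contra wv => ewx; apply/eqP.
  by apply: (one_nbr_in_maxclique mC xC wC vC); [rewrite esym | exact: mc_adj mL xL vL xv].
apply: (no_dominating_stable (X := [set w; s]) _ mL).
- by apply: stable2; rewrite esym.
- by move=> y; rewrite !inE => /orP [] /eqP ->.
- move=> y /Lvx /orP [] /eqP ->.
    by exists w; rewrite ?inE ?eqxx // (mc_adj mC vC wC) // eq_sym.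
  by exists s; rewrite ?inE ?eqxx ?orbT.
Qed.

Definition three_maxcliques v := exists L1 L2 L3,
  [/\ maximal_clique e L1, maximal_clique e L2, maximal_clique e L3,
      [&& v \in L1, v \in L2 & v \in L3] & [&& L1 != L2, L2 != L3 & L1 != L3]].

Lemma avoid_maxclique v C : three_maxcliques v -> exists M M',
  [/\ maximal_clique e M, maximal_clique e M', [&& v \in M & v \in M'], M != M' &
      (M != C) && (M' != C)].
Proof.
case=> L1 [L2 [L3 [m1 m2 m3 /and3P [v1 v2 v3] /and3P [n12 n23 n13]]]].
case: (eqVneq L1 C) => [E1 | h1].
  by exists L2, L3; rewrite m2 m3 v2 v3 n23 -E1 eq_sym n12 eq_sym n13.
case: (eqVneq L2 C) => [E2 | h2].
  by exists L1, L3; rewrite m1 m3 v1 v3 n13 h1 -E2 eq_sym n23.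
by exists L1, L2; rewrite m1 m2 v1 v2 n12 h1 h2.
Qed.

(* Then maximal cliques K through w, c and K' through
   w, c' are distinct (otherwise c' would see both c and u in L). *)
Lemma distinct_lifts u w L L' c c' K K' : maximal_clique e L -> maximal_clique e L' ->
  L != L' -> u \in L -> u \in L' -> c \in L -> c' \in L' ->
  e w c -> e w c' -> ~~ e w u ->
  maximal_clique e K -> maximal_clique e K' -> w \in K -> c \in K -> w \in K' -> c' \in K' ->
  K != K'.
Proof.
move=> mL mL' nLL' uL uL' cL c'L' ewc ewc' nwu mK mK' wK cK wK' c'K'.
apply/negP => /eqP E; subst K'.
have cu : c != u by apply: contraNneq nwu => <-.
have c'u : c' != u by apply: contraNneq nwu => <-.
have nL'L : L' != L by rewrite eq_sym.
have c'L := maxclique_other_notin mL mL' nL'L uL uL' c'L' c'u.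
have cc' : c != c' by apply: contraNneq c'L => <-.
have := one_nbr_in_maxclique mL c'L cL uL (mc_adj mK c'K' cK _) (mc_adj mL' c'L' uL' c'u).
by rewrite eq_sym cc' => /(_ isT) /eqP; rewrite (negbTE cu).
Qed.

(* Lying in three maximal cliques passes to non-adjacent vertices, since
   maximal cliques dominate G. *)
Lemma three_transfer u w : u != w -> ~~ e u w -> three_maxcliques u -> three_maxcliques w.
Proof.
move=> uw nuw [L1 [L2 [L3 [m1 m2 m3 /and3P [u1 u2 u3] /and3P [n12 n23 n13]]]]].
have nwu : ~~ e w u by rewrite esym.
have wL L : maximal_clique e L -> u \in L -> w \notin L.
  by move=> mL uL; apply: contra nuw => wL; rewrite (mc_adj mL uL wL uw).
case: (maxclique_dominating m1 (wL _ m1 u1)) => c1 c1L ew1.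
case: (maxclique_dominating m2 (wL _ m2 u2)) => c2 c2L ew2.
case: (maxclique_dominating m3 (wL _ m3 u3)) => c3 c3L ew3.
case: (edge_maxclique ew1) => K1 mK1 /andP [wK1 cK1].
case: (edge_maxclique ew2) => K2 mK2 /andP [wK2 cK2].
case: (edge_maxclique ew3) => K3 mK3 /andP [wK3 cK3].
exists K1, K2, K3; split => //; first by rewrite wK1 wK2 wK3.
rewrite (distinct_lifts m1 m2 n12 u1 u2 c1L c2L ew1 ew2 nwu mK1 mK2 wK1 cK1 wK2 cK2).
rewrite (distinct_lifts m2 m3 n23 u2 u3 c2L c3L ew2 ew3 nwu mK2 mK3 wK2 cK2 wK3 cK3).
by rewrite (distinct_lifts m1 m3 n13 u1 u3 c1L c3L ew1 ew3 nwu mK1 mK3 wK1 cK1 wK3 cK3).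
Qed.

(* ... and hence along a maximal clique with at least three vertices, through a
   neighbour t of a third vertex l, which sees neither u nor v. *)
Lemma three_along_clique C v u : maximal_clique e C -> 2 < #|C| -> v \in C ->
  u \in C -> u != v -> three_maxcliques v -> three_maxcliques u.
Proof.
move=> mC c3 vC uC uv thv.
case: (third_element v u c3) => l lC /andP [lv lu].
case: (nbr_outside mC lC (no_simplicial l)) => t elt tC.
have nt x : x \in C -> x != l -> ~~ e t x.
  move=> xC xl; apply: contra xl => etx; apply/eqP.
  by apply: (one_nbr_in_maxclique mC tC xC lC etx); rewrite esym.
have tnv : t != v by apply: contraNneq tC => ->.
have tnu : t != u by apply: contraNneq tC => ->.
apply: (three_transfer tnu (nt u uC _)); first by rewrite eq_sym.
apply: (three_transfer _ _ thv); first by rewrite eq_sym.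
by rewrite esym; apply: nt; rewrite // eq_sym.
Qed.

(* Step 5: if a maximal clique C has at least three vertices, no vertex v1 of
   C lies in three maximal cliques.  Fix a maximal stable set S through v1;
   profiles are taken with respect to S and v1. *)
Section BigClique.
Variables (C S : {set T}) (v1 : T).
Hypothesis mC : maximal_clique e C.
Hypothesis c3 : 2 < #|C|.
Hypothesis v1C : v1 \in C.
Hypothesis th1 : three_maxcliques v1.
Hypothesis mS : maximal_stable e S.
Hypothesis v1S : v1 \in S.

(* Every vertex u of C - v1 lies in three maximal cliques, two of which avoid
   C; their vertices in S are two distinct members of the profile of u. *)
Lemma two_profile_nbrs u : u \in C -> u != v1 ->
  exists t t', [/\ t \in S, t' \in S, t != t', (t != v1) && (t' != v1) &
    e u t && e u t'].
Proof.
move=> uC uv1.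
have thu := three_along_clique mC c3 v1C uC uv1 th1.
case: (avoid_maxclique C thu) => K [K' [mK mK' /andP [uK uK'] nKK' /andP [nKC nK'C]]].
case: (cis_meet mK mS) => t tK tS.
case: (cis_meet mK' mS) => t' tK' t'S.
have uS := clique_other_notin mC mS v1C v1S uC uv1.
have tu : t != u by apply: contraNneq uS => <-.
have t'u : t' != u by apply: contraNneq uS => <-.
have tC := maxclique_other_notin mC mK nKC uC uK tK tu.
have t'C := maxclique_other_notin mC mK' nK'C uC uK' tK' t'u.
exists t, t'; split => //.
- by apply: contraNneq tu => tt'; apply/eqP; apply: (maxclique_meet mK mK' nKK'); rewrite // tt'.
- by apply/andP; split; [apply: contraNneq tC => -> | apply: contraNneq t'C => ->].
- by rewrite (mc_adj mK uK tK) 1?eq_sym // (mc_adj mK' uK' tK') // eq_sym.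
Qed.

(* No third vertex u of C has its
   profile inside N(y): y would see the two profile vertices t, t' of u; a
   neighbour w of v1 in a maximal clique through y and t is then a twin of u,
   hence sees t' as well, which forces w = y. *)
Lemma no_profile_below u2 y u : u2 \in C -> y \notin C -> e u2 y -> ~~ e y v1 ->
  u \in C -> u != v1 -> u != u2 ->
  (forall s, s \in S -> s != v1 -> e u s -> e y s) -> False.
Proof.
move=> u2C yC eu2y nyv1 uC uv1 uu2 Hu.
case: (two_profile_nbrs uC uv1) => t [t' [tS t'S tt' /andP [tv1 t'v1] /andP [eut eut']]].
have tC := stable_other_notin mC mS v1C v1S tS tv1.
have eyt := Hu t tS tv1 eut.
have eyt' := Hu t' t'S t'v1 eut'.
case: (edge_maxclique eyt) => Lam mLam /andP [yLam tLam].
have v1Lam : v1 \notin Lam.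
  apply: contra nyv1 => v1Lam; rewrite (mc_adj mLam yLam v1Lam) //.
  by apply: contraNneq yC => ->.
case: (maxclique_dominating mLam v1Lam) => w wLam ev1w.
have wt : w != t by apply: contraTneq ev1w => ->; rewrite (negbTE (ms_nadj mS v1S tS)).
have wy : w != y by apply: contraTneq ev1w => ->; rewrite esym (negbTE nyv1).
have ewt : e w t := mc_adj mLam wLam tLam wt.
have wC : w \notin C.
  apply/negP => wC.
  have wu : w = u by apply: (one_nbr_in_maxclique mC tC wC uC); rewrite esym.
  subst w.
  have eyu : e y u by rewrite (mc_adj mLam yLam wLam) // eq_sym.
  by move: uu2; rewrite (one_nbr_in_maxclique mC yC uC u2C eyu) ?eqxx // esym.
case: (edge_maxclique ev1w) => N mN /andP [v1N wN].
have nCN : C != N by apply: contraNneq wC => ->.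
have wv1 : w != v1 by rewrite eq_sym (adj_neq ev1w).
case: (profile_twin mS v1S mC mN nCN v1C v1N wN wv1) => u' /andP [u'C u'v1] Hw.
have eu't : e u' t by rewrite -Hw.
have uu' := profile_nbr_unique mS v1S mC v1C uC u'C tS tv1 eut eu't.
subst u'.
have ewt' : e w t' by rewrite Hw.
have t'Lam : t' \notin Lam.
  by apply: (contra _ (ms_nadj mS tS t'S)) => t'Lam; apply: mc_adj mLam tLam t'Lam tt'.
by move: wy; rewrite (one_nbr_in_maxclique mLam t'Lam wLam yLam) ?eqxx // esym.
Qed.

(* Some vertex zz outside C, adjacent to v1 but not to y, has the same profile
   as u2: the twins z, z' of u2 in two maximal cliques through v1 avoiding C
   are non-adjacent and both see a, so y cannot see both (diamond y a z z'). *)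
Lemma twin_avoiding u2 y a : u2 \in C -> u2 != v1 -> a \in S -> a != v1 ->
  e u2 a -> e y a -> y != a ->
  exists zz, [/\ zz \notin C, e v1 zz, ~~ e y zz &
    forall s, s \in S -> s != v1 -> e zz s = e u2 s].
Proof.
move=> u2C u2v aS av1 eu2a eya ya.
case: (avoid_maxclique C th1) => M [M' [mM mM' /andP [v1M v1M'] nMM' /andP [nMC nM'C]]].
case: (profile_twin mS v1S mM mC nMC v1M v1C u2C u2v) => z /andP [zM zv] Hz.
case: (profile_twin mS v1S mM' mC nM'C v1M' v1C u2C u2v) => z' /andP [z'M' z'v] Hz'.
have candidate x N : maximal_clique e N -> N != C -> v1 \in N -> x \in N -> x != v1 ->
    (forall s, s \in S -> s != v1 -> e u2 s = e x s) -> ~~ e y x ->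
    exists zz, [/\ zz \notin C, e v1 zz, ~~ e y zz &
      forall s, s \in S -> s != v1 -> e zz s = e u2 s].
  move=> mN nNC v1N xN xv Hx nyx; exists x; split => //.
  - exact: maxclique_other_notin mC mN nNC v1C v1N xN xv.
  - by rewrite (mc_adj mN v1N xN) // eq_sym.
  - by move=> s sS sv; rewrite Hx.
case: (boolP (e y z)) => eyz; last exact: (candidate z M).
case: (boolP (e y z')) => eyz'; last exact: (candidate z' M').
have eaz : e a z by rewrite esym -Hz.
have eaz' : e a z' by rewrite esym -Hz'.
have nM'M : M' != M by rewrite eq_sym.
have z'M := maxclique_other_notin mM mM' nM'M v1M v1M' z'M' z'v.
have nzz' : ~~ e z z'.
  apply: contra zv => ezz'; apply/eqP.
  by apply: (one_nbr_in_maxclique mM z'M zM v1M); [rewrite esym | exact: mc_adj mM' z'M' v1M' z'v].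
have zz' : z != z' by apply: contraNneq z'M => <-.
exfalso; apply: dfree; exists y, a, z, z'; split => //.
  by rewrite /= !inE !negb_or ya (adj_neq eyz) (adj_neq eyz') (adj_neq eaz) (adj_neq eaz') zz'.
by rewrite eya eyz eyz' eaz eaz'.
Qed.

(* Given such y and zz, the vertices y, zz and those of S - v1 seen by neither
   of them form a stable set dominating C: v1 is seen by zz, u2 by y, and any
   other c in C by a vertex of S - v1 missed by y (no_profile_below), which zz
   misses as well since its profile is that of u2. *)
Lemma pair_dominates u2 y zz : u2 \in C -> u2 != v1 -> y \notin C -> e u2 y ->
  ~~ e y v1 -> zz \notin C -> e v1 zz -> ~~ e y zz ->
  (forall s, s \in S -> s != v1 -> e zz s = e u2 s) -> False.
Proof.
move=> u2C u2v yC eu2y nyv1 zzC ev1zz nyzz Hzz.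
pose P := [set p in S | [&& p != v1, ~~ e y p & ~~ e zz p]].
apply: (no_dominating_stable (X := y |: (zz |: P)) _ mC).
- apply/stableP => p q; rewrite !inE.
  move=> /or3P [/eqP-> | /eqP-> | /and4P [pS pv1 nyp nzp]]
         /or3P [/eqP-> | /eqP-> | /and4P [qS qv1 nyq nzq]];
    rewrite ?eirr // 1?esym //.
  first [exact: ms_nadj mS pS qS | exact: ms_nadj mS qS pS].
- move=> p; rewrite !inE => /or3P [/eqP-> // | /eqP-> // | /and4P [pS pv1 _ _]].
  exact: (stable_other_notin mC mS v1C v1S pS pv1).
- move=> c cC.
  case: (eqVneq c v1) => [-> | cv1]; first by exists zz; rewrite ?inE ?eqxx ?orbT.
  case: (eqVneq c u2) => [-> | cu2]; first by exists y; rewrite ?inE ?eqxx.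
  have [p pS /and3P [pv1 ecp nyp]] : exists2 p, p \in S & [&& p != v1, e c p & ~~ e y p].
    case: (boolP [exists p in S, [&& p != v1, e c p & ~~ e y p]]).
      by case/exists_inP => p pS H; exists p.
    rewrite negb_exists_in => /forall_inP H; exfalso.
    apply: (no_profile_below u2C yC eu2y nyv1 cC cv1 cu2) => s sS sv ecs.
    by move: (H s sS); rewrite sv ecs /= negbK.
  have nzp : ~~ e zz p.
    rewrite Hzz //; apply: contra cu2 => eu2p; apply/eqP.
    exact: (profile_nbr_unique mS v1S mC v1C cC u2C pS pv1 ecp eu2p).
  by exists p; rewrite // !inE pS pv1 nyp nzp !orbT.
Qed.

(* Hence the contradiction: pick u2 in C - v1, a maximal clique L2 through u2
   other than C (it has at least three vertices), its vertex a in S, a third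
   vertex y of L2, and the vertex zz of twin_avoiding. *)
Lemma big_clique_no_three : False.
Proof.
case: (third_element v1 v1 c3) => u2 u2C /andP [u2v _].
case: (nbr_outside mC u2C (no_simplicial u2)) => x eu2x xC.
case: (edge_maxclique eu2x) => L2 mL2 /andP [u2L2 xL2].
have nL2C : L2 != C by apply: contraNneq xC => <-.
have nCL2 : C != L2 by rewrite eq_sym.
have c3L2 := big_clique_spread mC c3 u2C mL2 u2L2 nL2C.
case: (cis_meet mL2 mS) => a aL2 aS.
have u2S := clique_other_notin mC mS v1C v1S u2C u2v.
have au2 : a != u2 by apply: contraNneq u2S => <-.
have eu2a : e u2 a by rewrite (mc_adj mL2 u2L2 aL2) // eq_sym.
have v1L2 : v1 \notin L2.
  by apply: (maxclique_other_notin mL2 mC nCL2 u2L2 u2C v1C); rewrite eq_sym.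
have av1 : a != v1 by apply: contraNneq v1L2 => <-.
case: (third_element u2 a c3L2) => y yL2 /andP [yu2 ya].
have yC := maxclique_other_notin mC mL2 nL2C u2C u2L2 yL2 yu2.
have eu2y : e u2 y by rewrite (mc_adj mL2 u2L2 yL2) // eq_sym.
have nyv1 : ~~ e y v1.
  apply: contra u2v => eyv1; apply/eqP.
  by apply: (one_nbr_in_maxclique mC yC u2C v1C) => //; rewrite esym.
have [zz [zzC ev1zz nyzz Hzz]] :=
  twin_avoiding u2C u2v aS av1 eu2a (mc_adj mL2 yL2 aL2 ya) ya.
exact: (pair_dominates u2C u2v yC eu2y nyv1 zzC ev1zz nyzz Hzz).
Qed.

End BigClique.

(* Every vertex lies in at most two maximal cliques when some maximal clique
   C has at least three vertices: a vertex u outside C sees some c in C, and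
   the maximal clique through u and c is again large. *)
Lemma no_vertex_three C u : maximal_clique e C -> 2 < #|C| -> ~ three_maxcliques u.
Proof.
move=> mC c3 th.
have big_three K : maximal_clique e K -> 2 < #|K| -> u \in K -> False.
  move=> mK c3K uK; case: (maxstable_through u) => S mS uS.
  exact: (big_clique_no_three mK c3K uK th mS uS).
case: (boolP (u \in C)) => uC; first exact: (big_three C).
case: (maxclique_dominating mC uC) => c cC euc.
case: (edge_maxclique euc) => K mK /andP [uK cK].
have nKC : K != C by apply: contraNneq uC => <-.
exact: (big_three K mK (big_clique_spread mC c3 cC mK cK nKC) uK).
Qed.

Section TwoClique.
Variables (a b : T) (C : {set T}).
Hypothesis mC : maximal_clique e C.
Hypothesis aC : a \in C.
Hypothesis bC : b \in C.
Hypothesis ab : a != b.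
Hypothesis c2 : #|C| = 2.

Lemma two_clique_cases u : u \in C -> (u == a) || (u == b).
Proof.
move=> uC; apply/negP => /negP; rewrite negb_or => /andP [ua ub].
have : 2 < #|C| by apply/card_gt2P; exists a, b, u; split; split; rewrite // eq_sym.
by rewrite c2.
Qed.

Lemma eab : e a b. Proof. exact: mc_adj mC aC bC ab. Qed.

Lemma two_clique_out u : u != a -> u != b -> u \notin C.
Proof. by move=> ua ub; apply/negP => /two_clique_cases; rewrite (negbTE ua) (negbTE ub). Qed.

Lemma sides_cover u : e b u || e a u.
Proof.
case: (eqVneq u a) => [-> | ua]; first by rewrite esym eab.
case: (eqVneq u b) => [-> | ub]; first by rewrite eab orbT.
case: (maxclique_dominating mC (two_clique_out ua ub)) => l lC eul.
by case/orP: (two_clique_cases lC) => /eqP E; subst l; rewrite esym in eul; rewrite eul ?orbT.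
Qed.

Lemma sides_disjoint u : e b u -> e a u -> False.
Proof.
move=> ebu eau.
have ua : u != a by apply: contraTneq eau => ->; rewrite eirr.
have ub : u != b by apply: contraTneq ebu => ->; rewrite eirr.
by move: ab; rewrite (one_nbr_in_maxclique mC (two_clique_out ua ub) aC bC) ?eqxx // esym.
Qed.

(* Two non-adjacent vertices of opposite sides would dominate {a, b}. *)
Lemma sides_complete x y : e b x -> e a y -> e x y.
Proof.
move=> ebx eay.
case: (eqVneq x a) => [-> // | xa].
case: (eqVneq y b) => [-> | yb]; first by rewrite esym.
have xb : x != b by apply: contraTneq ebx => ->; rewrite eirr.
have ya : y != a by apply: contraTneq eay => ->; rewrite eirr.
apply/negPn/negP => nxy; apply: (no_dominating_stable (X := [set x; y]) _ mC).
- exact: stable2.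
- by move=> z; rewrite !inE => /orP [] /eqP ->; apply: two_clique_out.
- move=> c /two_clique_cases /orP [] /eqP ->.
    by exists y; rewrite ?inE ?eqxx ?orbT.
  by exists x; rewrite ?inE ?eqxx.
Qed.

(* Two adjacent vertices x, x' of the side N(b), together with b and a
   neighbour s of a outside C, would form a diamond. *)
Lemma side_stable x x' : e b x -> e b x' -> ~~ e x x'.
Proof.
move=> ebx ebx'; apply/negP => exx'.
case: (nbr_outside mC aC (no_simplicial a)) => s eas sC.
have sb : s != b by apply: contraNneq sC => ->.
have nbs : ~~ e b s by apply/negP => ebs; apply: (sides_disjoint ebs eas).
have exs := sides_complete ebx eas.
have ex's := sides_complete ebx' eas.
have exb : e x b by rewrite esym.
have ex'b : e x' b by rewrite esym.
apply: dfree; exists x, x', b, s; split => //.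
- rewrite /= !inE !negb_or (adj_neq exx') (adj_neq exs) (adj_neq ex's).
  by rewrite (adj_neq exb) (adj_neq ex'b) eq_sym sb.
- by rewrite exx' exb exs ex'b ex's.
Qed.

End TwoClique.

Section BipartiteIso.
Variables (a b : T) (C : {set T}).
Hypothesis mC : maximal_clique e C.
Hypothesis aC : a \in C.
Hypothesis bC : b \in C.
Hypothesis ab : a != b.
Hypothesis c2 : #|C| = 2.

Let X := [set u | e b u].
Let Y := [set u | e a u].
Let aX : a \in X. Proof. by rewrite inE esym (eab mC aC bC ab). Qed.
Let bY : b \in Y. Proof. by rewrite inE (eab mC aC bC ab). Qed.

Definition bip_map (u : T) : ('I_#|X| + 'I_#|Y|)%type :=
  if u \in X then inl (enum_rank_in aX u) else inr (enum_rank_in bY u).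

Lemma side_Y u : u \notin X -> u \in Y.
Proof. by rewrite !inE; case/orP: (sides_cover mC aC bC ab c2 u) => ->. Qed.

Lemma bip_map_adj x y : e x y = Kmn_rel #|X| #|Y| (bip_map x) (bip_map y).
Proof.
have ba : b != a by rewrite eq_sym.
rewrite /bip_map; case: (boolP (x \in X)) => xX; case: (boolP (y \in X)) => yX /=.
- by apply/negbTE; move: xX yX; rewrite !inE; apply: (side_stable mC aC bC ab c2).
- by move: xX (side_Y yX); rewrite !inE; apply: (sides_complete mC aC bC ab c2).
- by rewrite esym; move: yX (side_Y xX); rewrite !inE; apply: (sides_complete mC aC bC ab c2).
- by apply/negbTE; move: (side_Y xX) (side_Y yX); rewrite !inE; apply: (side_stable mC bC aC ba c2).
Qed.

Lemma bip_map_bij : bijective bip_map.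
Proof.
apply: inj_surj_bij.
- move=> x y; rewrite /bip_map.
  case: (boolP (x \in X)) => xX; case: (boolP (y \in X)) => yX //= [] E.
    exact: (enum_rank_in_inj xX yX E).
  exact: (enum_rank_in_inj (side_Y xX) (side_Y yX) E).
- case=> [i | j].
    by exists (enum_val i); rewrite /bip_map (enum_valP i) enum_valK_in.
  exists (enum_val j).
  have jY : enum_val j \in Y := enum_valP j.
  have jX : enum_val j \notin X.
    by apply/negP; rewrite !inE in jY * => jX; apply: (sides_disjoint mC aC bC ab c2 jX jY).
  by rewrite /bip_map (negbTE jX) enum_valK_in.
Qed.

(* Both sides have two vertices: a (resp. b) and a neighbour outside C. *)
Lemma sides_ge2 : (2 <= #|X|) /\ (2 <= #|Y|).
Proof.
split; apply/card_gt1P.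
  case: (nbr_outside mC bC (no_simplicial b)) => t ebt tC.
  by exists a, t; split; rewrite // ?inE //; apply: contraNneq tC => <-.
case: (nbr_outside mC aC (no_simplicial a)) => t eat tC.
by exists b, t; split; rewrite // ?inE //; apply: contraNneq tC => <-.
Qed.

Lemma bipartite_case : exists m n : nat, [/\ 2 <= m, 2 <= n & isomorphic e (Kmn_rel m n)].
Proof.
exists #|X|, #|Y|; case: sides_ge2 => h1 h2; split => //.
by exists bip_map; split; [exact: bip_map_bij | exact: bip_map_adj].
Qed.

End BipartiteIso.

(* Since maximal cliques dominate G, every vertex u has a foot in a maximal
   clique L: u itself if u is in L, and its unique neighbour in L otherwise. *)
Definition foot (L : {set T}) u :=
  if u \in L then u else odflt u [pick l in L | e u l].

Lemma foot_id (L : {set T}) u : u \in L -> foot L u = u.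
Proof. by rewrite /foot => ->. Qed.

Lemma foot_spec L u : maximal_clique e L -> u \notin L ->
  (foot L u \in L) && e u (foot L u).
Proof.
move=> mL uL; rewrite /foot (negbTE uL).
case: pickP => [l // | H].
case: (maxclique_dominating mL uL) => l lL eul.
by move: (H l); rewrite lL eul.
Qed.

Lemma foot_in L u : maximal_clique e L -> foot L u \in L.
Proof.
move=> mL; case: (boolP (u \in L)) => uL; first by rewrite foot_id.
by case/andP: (foot_spec mL uL).
Qed.

Lemma foot_adj L u : maximal_clique e L -> u \notin L -> e u (foot L u).
Proof. by move=> mL uL; case/andP: (foot_spec mL uL). Qed.

Lemma foot_eq L u l : maximal_clique e L -> u \notin L -> l \in L -> e u l -> foot L u = l.
Proof.
move=> mL uL lL eul.
exact: (one_nbr_in_maxclique mL uL (foot_in u mL) lL (foot_adj mL uL) eul).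
Qed.

(* Two maximal cliques C, N through a common vertex v have the same size:
   sending a vertex of N - v to its twin in C - v is injective. *)
Lemma card_maxclique_le S v C N : maximal_stable e S -> v \in S ->
  maximal_clique e C -> maximal_clique e N -> C != N -> v \in C -> v \in N ->
  #|N| <= #|C|.
Proof.
move=> mS vS mC mN nCN vC vN.
pose twin w u := [&& u \in C, u != v &
  [forall s, (s \in S) ==> (s != v) ==> (e w s == e u s)]].
pose f w := odflt v [pick u | twin w u].
have fP w : w \in N -> w != v -> twin w (f w).
  move=> wN wv; rewrite /f; case: pickP => [u // | H].
  case: (profile_twin mS vS mC mN nCN vC vN wN wv) => u /andP [uC uv] Hu.
  move: (H u); rewrite /twin uC uv /=; move/negP; case; apply/forallP => s.
  by apply/implyP => sS; apply/implyP => sv; rewrite Hu.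
have finj : {in N :\ v &, injective f}.
  move=> w w'; rewrite !inE => /andP [wv wN] /andP [w'v w'N] E.
  have /and3P [_ _ /forallP H] := fP w wN wv.
  have /and3P [_ _ /forallP H'] := fP w' w'N w'v.
  case: (profile_nonempty mS vS mN vN wN wv) => s0 s0S /andP [ews0 s0v].
  have eus0 : e (f w) s0 by move: (H s0); rewrite s0S s0v ews0 /= => /eqP <-.
  have ew's0 : e w' s0 by move: (H' s0); rewrite s0S s0v -E eus0 /= => /eqP ->.
  exact: (profile_nbr_unique mS vS mN vN wN w'N s0S s0v ews0 ew's0).
have sub : f @: (N :\ v) \subset C :\ v.
  apply/subsetP => u /imsetP [w]; rewrite !inE => /andP [wv wN] ->.
  by have /and3P [-> -> _] := fP w wN wv.
have := subset_leq_card sub; rewrite (card_in_imset finj).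
by rewrite (cardsD1 v N) (cardsD1 v C) vN vC.
Qed.

(* Fix a maximal clique C with at least three vertices and another maximal
   clique D meeting it in v1.  The pair of feet (foot D u, foot C u) is a
   grid coordinate of u. *)
Section Grid.
Variables (C D : {set T}) (v1 : T).
Hypothesis mC : maximal_clique e C.
Hypothesis c3 : 2 < #|C|.
Hypothesis v1C : v1 \in C.
Hypothesis mD : maximal_clique e D.
Hypothesis v1D : v1 \in D.
Hypothesis nDC : D != C.

Let nCD : C != D. Proof. by rewrite eq_sym. Qed.

Lemma at_most_two_maxcliques u L1 L2 L3 : maximal_clique e L1 ->
  maximal_clique e L2 -> maximal_clique e L3 -> u \in L1 -> u \in L2 -> u \in L3 ->
  L1 != L2 -> L1 != L3 -> L3 = L2.
Proof.
move=> m1 m2 m3 u1 u2 u3 n12 n13; apply/eqP/negPn/negP => n32.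
apply: (no_vertex_three mC c3 (u := u)); exists L1, L2, L3; split => //.
  by rewrite u1 u2 u3.
by rewrite n12 n13 eq_sym n32.
Qed.

(* Vertices with a common foot in L are adjacent: both lie in L or in the
   second maximal clique through that foot. *)
Lemma same_foot_adj L u u' : maximal_clique e L -> u != u' -> foot L u = foot L u' -> e u u'.
Proof.
move=> mL uu' E.
case: (boolP (u \in L)) => uL.
  case: (boolP (u' \in L)) => u'L.
    by move: E uu'; rewrite !foot_id // => ->; rewrite eqxx.
  by move: (foot_adj mL u'L); rewrite -E foot_id // esym.
case: (boolP (u' \in L)) => u'L.
  by move: (foot_adj mL uL); rewrite E foot_id.
set c := foot L u' in E.
have cL : c \in L by exact: foot_in.
have euc : e u c by rewrite -E; exact: foot_adj.
have eu'c : e u' c by exact: foot_adj.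
case: (edge_maxclique euc) => K mK /andP [uK cK].
case: (edge_maxclique eu'c) => K' mK' /andP [u'K' cK'].
have nLK : L != K by apply: contraNneq uL => ->.
have nLK' : L != K' by apply: contraNneq u'L => ->.
have E' := at_most_two_maxcliques mL mK mK' cL cK cK' nLK nLK'.
subst K'.
exact: (mc_adj mK uK u'K' uu').
Qed.

Lemma CD_meet u : u \in C -> u \in D -> u = v1.
Proof. by move=> uC uD; exact: (maxclique_meet mC mD nCD uC uD v1C v1D). Qed.

Lemma footD_C c : c \in C -> foot D c = v1.
Proof.
move=> cC; case: (boolP (c \in D)) => cD; first by rewrite foot_id // (CD_meet cC cD).
apply: (foot_eq mD cD v1D); rewrite (mc_adj mC cC v1C) //.
by apply: contraNneq cD => ->.
Qed.

Lemma footC_D r : r \in D -> foot C r = v1.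
Proof.
move=> rD; case: (boolP (r \in C)) => rC; first by rewrite foot_id // (CD_meet rC rD).
apply: (foot_eq mC rC v1C); rewrite (mc_adj mD rD v1D) //.
by apply: contraNneq rC => ->.
Qed.

Lemma nbr_v1_in_D u : u \notin C -> e u v1 -> u \in D.
Proof.
move=> uC euv.
case: (edge_maxclique euv) => K mK /andP [uK vK].
have nCK : C != K by apply: contraNneq uC => ->.
by rewrite -(at_most_two_maxcliques mC mD mK v1C v1D vK nCD nCK).
Qed.

Lemma foot_v1_in_D u : u \notin C -> foot C u = v1 -> u \in D.
Proof. by move=> uC E; apply: nbr_v1_in_D => //; rewrite -E; apply: foot_adj. Qed.

Lemma foot_not_v1 u : foot C u != v1 -> u \notin D.
Proof. by apply: contra => uD; rewrite footC_D. Qed.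

Lemma grid_nonadj r c : r \in D -> r != v1 -> c \in C -> c != v1 -> ~~ e r c.
Proof.
move=> rD rv cC cv; apply/negP => erc.
have rC : r \notin C by apply: contra rv => rC; rewrite (CD_meet rC rD).
by move: cv; rewrite -(footC_D rD) (foot_eq mC rC cC erc) eqxx.
Qed.

Lemma adj_foot_special x y : e x y -> foot C x != foot C y ->
  (x \in C) || (foot C x == v1) -> foot D x = foot D y.
Proof.
move=> exy ncc; case: (boolP (x \in C)) => [xC _ | xC /= /eqP xv].
  case: (boolP (y \in C)) => yC; first by rewrite !footD_C.
  by move: ncc; rewrite (foot_id xC) (foot_eq mC yC xC) ?eqxx // esym.
have xD := foot_v1_in_D xC xv.
have yD : y \notin D by apply: contra ncc => yD; rewrite xv footC_D.
by rewrite (foot_id xD) (foot_eq mD yD xD) // esym.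
Qed.

(* In general, with K, R the maximal cliques joining u to its feet in C and D
   and Lam the one through the edge u u', Lam differs from K, so Lam = R. *)
Lemma adj_foot_generic u u' : u \notin C -> u' \notin C -> u' \notin D -> e u u' ->
  foot C u != foot C u' -> foot C u != v1 -> foot D u = foot D u'.
Proof.
move=> uC u'C u'D euu' ncc cv.
have uD := foot_not_v1 cv.
set r := foot D u; set c := foot C u in ncc cv.
have rD : r \in D by apply: foot_in.
have cC : c \in C by apply: foot_in.
have eur : e u r by apply: foot_adj.
have euc : e u c by apply: foot_adj.
case: (edge_maxclique euc) => K mK /andP [uK cK].
case: (edge_maxclique eur) => R mR /andP [uR rR].
case: (edge_maxclique euu') => Lam mLam /andP [uLam u'Lam].
have rv : r != v1.
  by apply: contra cv => /eqP rv; apply/eqP; apply: (foot_eq mC uC v1C); rewrite -rv.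
have nKR : K != R.
  apply: contraNneq (grid_nonadj rD rv cC cv) => KR; subst R.
  apply: (mc_adj mK rR cK); apply: contraNneq rv => rc.
  by apply/eqP; apply: CD_meet => //; rewrite rc.
have nKLam : K != Lam.
  apply: contraNneq ncc => KLam; subst Lam.
  by rewrite (foot_eq mC u'C cC) // (mc_adj mK u'Lam cK) //; apply: contraNneq u'C => ->.
have E := at_most_two_maxcliques mK mR mLam uK uR uLam nKR nKLam; subst Lam.
have u'r : u' != r by apply: contraNneq u'D => ->.
by rewrite (foot_eq mD u'D rD (mc_adj mR u'Lam rR u'r)).
Qed.

Lemma adj_share_foot u u' : e u u' -> (foot C u == foot C u') || (foot D u == foot D u').
Proof.
move=> euu'; case: (eqVneq (foot C u) (foot C u')) => //= ncc; apply/eqP.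
case: (boolP ((u \in C) || (foot C u == v1))) => [special | ].
  exact: adj_foot_special.
case: (boolP ((u' \in C) || (foot C u' == v1))) => [special' | ].
  by symmetry; apply: adj_foot_special => //; [rewrite esym | rewrite eq_sym].
rewrite !negb_or => /andP [u'C cv'] /andP [uC cv].
exact: (adj_foot_generic uC u'C (foot_not_v1 cv') euu' ncc cv).
Qed.

Lemma feet_inj_C u u' : u \in C -> foot C u = foot C u' -> foot D u = foot D u' -> u = u'.
Proof.
move=> uC Ec Ed; apply/eqP/negPn/negP => uu'.
case: (boolP (u' \in C)) => u'C.
  by move: uu'; rewrite -(foot_id uC) Ec (foot_id u'C) eqxx.
have Ed' : foot D u' = v1 by rewrite -Ed footD_C.
case: (boolP (u' \in D)) => u'D.
  by move: u'C; rewrite -(foot_id u'D) Ed' v1C.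
have eu'v : e u' v1 by rewrite -Ed'; apply: foot_adj.
by move: u'D; rewrite (nbr_v1_in_D u'C eu'v).
Qed.

(* Otherwise u, u' are adjacent (common foot in C), and a maximal clique
   through them contains both feet, which would be adjacent. *)
Lemma feet_inj u u' : foot C u = foot C u' -> foot D u = foot D u' -> u = u'.
Proof.
move=> Ec Ed.
case: (boolP (u \in C)) => uC; first exact: feet_inj_C.
case: (boolP (u' \in C)) => u'C; first by symmetry; apply: feet_inj_C.
apply/eqP/negPn/negP => uu'.
set c := foot C u' in Ec.
case: (eqVneq c v1) => [cv | cv].
  have uD : u \in D by apply: foot_v1_in_D; rewrite // Ec.
  have u'D : u' \in D by apply: foot_v1_in_D.
  by move: uu'; rewrite -(foot_id uD) Ed (foot_id u'D) eqxx.
set r := foot D u' in Ed.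
have cC : c \in C by apply: foot_in.
have rD : r \in D by apply: foot_in.
have u'D : u' \notin D by apply: foot_not_v1.
have rv : r != v1.
  apply: contra cv => /eqP rv; apply/eqP; apply: (foot_eq mC u'C v1C).
  by rewrite -rv; exact: foot_adj mD u'D.
have uD : u \notin D by apply: foot_not_v1; rewrite Ec.
case: (edge_maxclique (same_foot_adj mC uu' Ec)) => Lam mLam /andP [uLam u'Lam].
have cLam : c \in Lam.
  apply: (common_nbr_in mLam uLam u'Lam uu'); last exact: foot_adj.
  by rewrite -Ec; apply: foot_adj.
have rLam : r \in Lam.
  apply: (common_nbr_in mLam uLam u'Lam uu'); last exact: foot_adj.
  by rewrite -Ed; apply: foot_adj.
have rc : r != c by apply: contraNneq rv => rc; apply/eqP; apply: CD_meet => //; rewrite rc.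
by move: (grid_nonadj rD rv cC cv); rewrite (mc_adj mLam rLam cLam rc).
Qed.

(* Every pair of feet occurs: for r in D - v1 and c in C - v1, the neighbour
   of r in a second maximal clique K through c has feet r and c. *)
Lemma feet_surj r c : r \in D -> c \in C -> exists u, foot D u = r /\ foot C u = c.
Proof.
move=> rD cC.
case: (eqVneq r v1) => [-> | rv]; first by exists c; rewrite footD_C // foot_id.
case: (eqVneq c v1) => [-> | cv]; first by exists r; rewrite footC_D // foot_id.
have nrc := grid_nonadj rD rv cC cv.
case: (nbr_outside mC cC (no_simplicial c)) => x ecx xC.
case: (edge_maxclique ecx) => K mK /andP [cK xK].
have nKC : K != C by apply: contraNneq xC => <-.
have rc : r != c by apply: contraNneq rv => rc; apply/eqP; apply: CD_meet => //; rewrite rc.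
have rK : r \notin K by apply: contra nrc => rK; apply: mc_adj mK rK cK rc.
case: (maxclique_dominating mK rK) => u uK eru.
have uc : u != c by apply: contraNneq nrc => <-.
have uC : u \notin C := maxclique_other_notin mC mK nKC cC cK uK uc.
have uD : u \notin D.
  apply: (foot_not_v1 (u := u)); rewrite (foot_eq mC uC cC (mc_adj mK uK cK uc)) //.
exists u; split; first by apply: (foot_eq mD uD rD); rewrite esym.
exact: (foot_eq mC uC cC (mc_adj mK uK cK uc)).
Qed.

Lemma card_DC : #|D| = #|C|.
Proof.
case: (maxstable_through v1) => S mS v1S.
apply/eqP; rewrite eqn_leq (card_maxclique_le mS v1S mC mD nCD v1C v1D).
exact: (card_maxclique_le mS v1S mD mC nDC v1D v1C).
Qed.

Definition grid_map (u : T) : knn_edge #|C| :=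
  kedge (cast_ord card_DC (enum_rank_in v1D (foot D u))) (enum_rank_in v1C (foot C u)).

Lemma rankD_eq u u' : (cast_ord card_DC (enum_rank_in v1D (foot D u)) ==
  cast_ord card_DC (enum_rank_in v1D (foot D u'))) = (foot D u == foot D u').
Proof.
apply/eqP/eqP => [/cast_ord_inj | -> //].
by apply: enum_rank_in_inj; apply: foot_in.
Qed.

Lemma rankC_eq u u' :
  (enum_rank_in v1C (foot C u) == enum_rank_in v1C (foot C u')) = (foot C u == foot C u').
Proof. by apply/eqP/eqP => [| -> //]; apply: enum_rank_in_inj; apply: foot_in. Qed.

Lemma grid_map_bij : bijective grid_map.
Proof.
apply: inj_surj_bij.
  move=> u u' /kedge_inj [/eqP ED /eqP EC].
  by rewrite rankD_eq in ED; rewrite rankC_eq in EC; apply: feet_inj; apply/eqP.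
move=> E; case: (kedge_surj E) => i [j ->].
set r := enum_val (cast_ord (Logic.eq_sym card_DC) i).
set c := enum_val j.
case: (feet_surj (enum_valP _ : r \in D) (enum_valP _ : c \in C)) => u [Er Ec].
by exists u; rewrite /grid_map Er Ec /r /c !enum_valK_in cast_ordKV.
Qed.

Lemma grid_map_adj x y : e x y = line_rel (grid_map x) (grid_map y).
Proof.
rewrite /grid_map line_rel_kedge rankD_eq rankC_eq.
case: (eqVneq x y) => [-> | xy]; first by rewrite eirr !eqxx.
have -> : (foot D x != foot D y) || (foot C x != foot C y).
  rewrite -negb_and; apply/negP => /andP [/eqP h1 /eqP h2].
  by move: xy; rewrite (feet_inj h2 h1) eqxx.
rewrite /=; apply/idP/idP; first by move/adj_share_foot; rewrite orbC.
by case/orP => /eqP h; [exact: (same_foot_adj mD xy h) | exact: (same_foot_adj mC xy h)].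
Qed.

Lemma grid_case : exists n : nat, 3 <= n /\ isomorphic e (@line_rel _ (Kmn_rel n n)).
Proof.
exists #|C|; split => //.
by exists grid_map; split; [exact: grid_map_bij | exact: grid_map_adj].
Qed.

End Grid.

Lemma cis_nonsimplicial_structure :
  (exists m n : nat, [/\ 2 <= m, 2 <= n & isomorphic e (Kmn_rel m n)]) \/
  (exists n : nat, 3 <= n /\ isomorphic e (@line_rel _ (Kmn_rel n n))).
Proof.
case/card_gt0P: conn.1 => z _.
case: (maxclique_exists (clique1 z)) => C mC sub.
have zC : z \in C by rewrite (subsetP sub) // inE.
have c2 := maxclique_ge2 mC.
case: (ltnP 2 #|C|) => c3.
  right.
  case: (nbr_outside mC zC (no_simplicial z)) => x ezx xC.
  case: (edge_maxclique ezx) => D mD /andP [zD xD].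
  have nDC : D != C by apply: contraNneq xC => <-.
  exact: (grid_case mC c3 zC mD zD nDC).
left.
have card2 : #|C| = 2 by apply/eqP; rewrite eqn_leq c3 c2.
case/card_gt1P: c2 => a [b [aC bC ab]].
exact: (bipartite_case mC aC bC ab card2).
Qed.

End NoSimplicial.
End CISDiamondFree.
End DiamondFree.
End Graph.

(* Converse direction.  CIS is invariant under isomorphism: an isomorphism
   maps maximal cliques and maximal stable sets onto maximal ones. *)
Section Transfer.
Variables (T U : finType) (e : rel T) (f : rel U) (g : T -> U) (h : U -> T).
Hypothesis gK : cancel g h.
Hypothesis hK : cancel h g.
Hypothesis ef : forall x y, e x y = f (g x) (g y).

Lemma maxset_img (P : {set T} -> bool) (Q : {set U} -> bool) A :
  (forall A, P A -> Q (g @: A)) -> (forall B, Q B -> P (h @: B)) ->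
  maxset P A -> maxset Q (g @: A).
Proof.
move=> PQ QP /maxsetP [PA mA]; apply/maxsetP; split; first exact: PQ.
move=> B QB sub.
have sub' : A \subset h @: B.
  apply/subsetP => a aA; apply/imsetP; exists (g a); last by rewrite gK.
  by rewrite (subsetP sub) // imset_f.
rewrite -(mA _ (QP _ QB) sub') -imset_comp; apply/setP => b; apply/idP/imsetP.
  by move=> bB; exists b; rewrite //= hK.
by case=> b' b'B ->; rewrite /= hK.
Qed.

Lemma clique_img A : is_clique e A -> is_clique f (g @: A).
Proof.
move/cliqueP => H; apply/cliqueP => x y /imsetP [a aA ->] /imsetP [b bA ->] nab.
by rewrite -ef; apply: H => //; apply: contraNneq nab => ->.
Qed.

Lemma clique_pre B : is_clique f B -> is_clique e (h @: B).
Proof.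
move/cliqueP => H; apply/cliqueP => x y /imsetP [a aB ->] /imsetP [b bB ->] nab.
by rewrite ef !hK; apply: H => //; apply: contraNneq nab => ->.
Qed.

Lemma stable_img A : is_stable e A -> is_stable f (g @: A).
Proof.
move/stableP => H; apply/stableP => x y /imsetP [a aA ->] /imsetP [b bA ->].
by rewrite -ef; exact: H.
Qed.

Lemma stable_pre B : is_stable f B -> is_stable e (h @: B).
Proof.
move/stableP => H; apply/stableP => x y /imsetP [a aB ->] /imsetP [b bB ->].
by rewrite ef !hK; exact: H.
Qed.

Lemma CIS_transfer : CIS f -> CIS e.
Proof.
move=> cf C S mC mS.
have mC' : maximal_clique f (g @: C) := maxset_img clique_img clique_pre mC.
have mS' : maximal_stable f (g @: S) := maxset_img stable_img stable_pre mS.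
case/set0Pn: (cf _ _ mC' mS') => y /setIP [/imsetP [c cC ->] /imsetP [s sS E]].
have cs : c = s by rewrite -(gK c) E gK.
by apply/set0Pn; exists c; rewrite inE cC cs sS.
Qed.

End Transfer.

Lemma iso_CIS (T U : finType) (e : rel T) (f : rel U) : isomorphic e f -> CIS f -> CIS e.
Proof. by case=> g [[h gK hK] ef]; exact: (CIS_transfer gK hK ef). Qed.

(* A clique simplicial graph is CIS: a maximal stable set meets N[v]. *)
Lemma clique_simplicial_CIS (T : finType) (e : rel T) : symmetric e -> irreflexive e ->
  clique_simplicial e -> CIS e.
Proof.
move=> esym eirr cs C S mC mS.
case/existsP: (cs C mC) => v /andP [sv /eqP CE].
case: (boolP (v \in S)) => vS.
  by apply/set0Pn; exists v; rewrite inE vS CE /cnbhd !inE eqxx.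
case: (maxstable_dominating esym eirr mS vS) => s sS evs.
by apply/set0Pn; exists s; rewrite inE sS CE /cnbhd !inE evs orbT.
Qed.

Lemma maxstable_nonempty (V : finType) (r : rel V) (S : {set V}) (x0 : V) :
  irreflexive r -> maximal_stable r S -> exists s, s \in S.
Proof.
move=> irr /maxsetP [_ mS]; case: (set_0Vmem S) => [S0 | [s sS]]; last by exists s.
move: (mS _ (stable1 irr x0)); rewrite S0 sub0set => /(_ isT) /setP /(_ x0).
by rewrite !inE eqxx.
Qed.

(* K_{m,n} is CIS: a maximal stable set is one whole side, and a maximal
   clique contains a vertex of each side. *)
Section KmnCIS.
Variables (m n : nat).
Hypothesis m0 : 0 < m.
Hypothesis n0 : 0 < n.
Let K := Kmn_rel m n.

Definition isl (x : ('I_m + 'I_n)%type) := if x is inl _ then true else false.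

Lemma K_adj x y : K x y = (isl x != isl y).
Proof. by case: x; case: y. Qed.

Lemma K_irr : irreflexive K.
Proof. by case. Qed.

Lemma maxclique_both_sides C b : maximal_clique K C -> exists2 c, c \in C & isl c == b.
Proof.
move=> mC.
case: (boolP [exists c in C, isl c == b]) => [/exists_inP [c ? ?] | ]; first by exists c.
rewrite negb_exists_in => /forall_inP H; exfalso.
have [x xb] : exists x : ('I_m + 'I_n)%type, isl x = b.
  by case: b {H}; [exists (inl (Ordinal m0)) | exists (inr (Ordinal n0))].
have oth y : y \in C -> K x y by move=> yC; rewrite K_adj xb eq_sym H.
move/maxsetP: mC => [cC mx].
have cl : is_clique K (x |: C).
  apply/cliqueP => a c; rewrite !inE.
  move=> /orP [/eqP-> | aC] /orP [/eqP-> | cC'].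
  - by rewrite eqxx.
  - by move=> _; apply: oth.
  - by move=> _; rewrite K_adj eq_sym -K_adj; apply: oth.
  - by move/cliqueP: cC; apply.
have xC : x \in C by rewrite -(mx _ cl (subsetUr _ _)) !inE eqxx.
by move: (H x xC); rewrite xb eqxx.
Qed.

Lemma Kmn_CIS : CIS K.
Proof.
move=> C S mC mS.
case: (maxstable_nonempty (inl (Ordinal m0)) K_irr mS) => s sS.
case: (maxclique_both_sides (isl s) mC) => c cC /eqP cs.
apply/set0Pn; exists c; rewrite inE cC /=.
move/maxsetP: mS => [sS' mx].
have sameS y : y \in S -> isl y = isl s.
  move=> yS; apply/eqP/negPn/negP => d.
  by move/stableP: sS' => /(_ y s yS sS); rewrite K_adj d.
have st : is_stable K (c |: S).
  apply/stableP => a b; rewrite !inE.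
  move=> /orP [/eqP-> | aS] /orP [/eqP-> | bS].
  - by rewrite K_adj eqxx.
  - by rewrite K_adj cs (sameS b bS) eqxx.
  - by rewrite K_adj cs (sameS a aS) eqxx.
  - by move/stableP: sS'; apply.
by rewrite -(mx _ st (subsetUr _ _)) !inE eqxx.
Qed.

End KmnCIS.

(* L(K_{n,n}) is CIS: its maximal cliques are the rows {kedge i j | j} and the
   columns {kedge i j | i}, and a maximal stable set (a perfect matching)
   meets every row and every column. *)
Section LineCIS.
Variable n : nat.
Hypothesis n0 : 0 < n.
Let r := @line_rel _ (Kmn_rel n n).

Lemma r_irr : irreflexive r.
Proof. by move=> E; rewrite /r /line_rel eqxx. Qed.

Lemma row_clique i : is_clique r [set kedge i j | j : 'I_n].
Proof.
apply/cliqueP => x y /imsetP [j _ ->] /imsetP [j' _ ->] nxy.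
rewrite /r line_rel_kedge eqxx /= ?orbF ?orbT ?andbT.
by apply: contraNneq nxy => ->.
Qed.

Lemma col_clique j : is_clique r [set kedge i j | i : 'I_n].
Proof.
apply/cliqueP => x y /imsetP [i _ ->] /imsetP [i' _ ->] nxy.
rewrite /r line_rel_kedge eqxx /= ?orbF ?orbT ?andbT.
by apply: contraNneq nxy => ->.
Qed.

(* A maximal clique through kedge i0 j0 not inside row i0 contains some
   kedge i1 j0 with i1 != i0, and then lies inside column j0. *)
Lemma maxclique_row_or_col C : maximal_clique r C ->
  (exists i, forall j, kedge i j \in C) \/ (exists j, forall i, kedge i j \in C).
Proof.
move=> mC; move/maxsetP: (mC) => [/cliqueP cC mx].
have [E0 E0C] : exists E, E \in C.
  by apply: (maxclique_nonempty _ mC); apply/card_gt0P; exists (kedge (Ordinal n0) (Ordinal n0)).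
case: (kedge_surj E0) => i0 [j0 E0E]; subst E0.
case: (boolP [forall E in C, [exists j, E == kedge i0 j]]) => [/forall_inP H | ].
  have sub : C \subset [set kedge i0 j | j : 'I_n].
    by apply/subsetP => E /H /existsP [j /eqP ->]; exact: imset_f.
  by left; exists i0 => j; rewrite -(mx _ (row_clique i0) sub) imset_f.
rewrite negb_forall_in => /exists_inP [E1 E1C]; rewrite negb_exists => /forallP H1.
case: (kedge_surj E1) => i1 [j1 E1E]; subst E1.
have i10 : i1 != i0 by apply: contraTneq (H1 j1) => ->; rewrite eqxx.
have E01 : kedge i0 j0 != kedge i1 j1.
  by apply: contraNneq i10 => /kedge_inj [-> _].
move: (cC _ _ E0C E1C E01); rewrite /r line_rel_kedge eq_sym (negbTE i10) /=.
move=> /eqP j01; subst j1.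
have sub : C \subset [set kedge i j0 | i : 'I_n].
  apply/subsetP => E EC; case: (kedge_surj E) => i [j EE]; subst E.
  case: (eqVneq j j0) => [-> | jj0]; first by apply/imsetP; exists i.
  have in_row i' : kedge i' j0 \in C -> i = i'.
    move=> E'C; have d : kedge i j != kedge i' j0.
      by apply: contraNneq jj0 => /kedge_inj [_ ->].
    by move: (cC _ _ EC E'C d); rewrite /r line_rel_kedge (negbTE jj0) orbF orbT => /eqP.
  by move: i10; rewrite -(in_row _ E1C) -(in_row _ E0C) eqxx.
by right; exists j0 => i; rewrite -(mx _ (col_clique j0) sub); apply/imsetP; exists i.
Qed.

Section MaxStable.
Variable S : {set knn_edge n}.
Hypothesis mS : maximal_stable r S.

Let P := [set ij : 'I_n * 'I_n | kedge ij.1 ij.2 \in S].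

Lemma stable_coords a b a' b' : kedge a b \in S -> kedge a' b' \in S ->
  (a == a') || (b == b') -> (a = a') /\ (b = b').
Proof.
move=> h1 h2 h.
move: (ms_nadj mS h1 h2); rewrite /r line_rel_kedge h andbT negb_or !negbK.
by case/andP => /eqP -> /eqP ->.
Qed.

Lemma rows_cols_card :
  #|[set ij.1 | ij in P]| = #|[set ij.2 | ij in P]|.
Proof.
rewrite !card_in_imset // => [[a b] [a' b'] | [a b] [a' b']]; rewrite !inE /= => h1 h2 E.
  have h : (a == a') || (b == b') by rewrite E eqxx ?orbT.
  by have [-> ->] := stable_coords h1 h2 h.
have h : (a == a') || (b == b') by rewrite E eqxx ?orbT.
by have [-> ->] := stable_coords h1 h2 h.
Qed.

Lemma stable_extend i j : (forall j', kedge i j' \notin S) ->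
  (forall i', kedge i' j \notin S) -> False.
Proof.
move=> Hi Hj.
have key F : F \in S -> ~~ r (kedge i j) F && ~~ r F (kedge i j).
  move=> FS; case: (kedge_surj F) => a [b FE]; subst F.
  have ai : a != i by apply: contraNneq (Hi b) => <-.
  have bj : b != j by apply: contraNneq (Hj a) => <-.
  by rewrite /r !line_rel_kedge ![i == _]eq_sym ![j == _]eq_sym (negbTE ai) (negbTE bj)
    !andbF.
have st : is_stable r (kedge i j |: S).
  apply/stableP => x y; rewrite !inE => /orP [/eqP-> | xS] /orP [/eqP-> | yS].
  - by rewrite r_irr.
  - by case/andP: (key y yS).
  - by case/andP: (key x xS).
  - exact: ms_nadj mS xS yS.
move/maxsetP: mS => [_ mx].
by move: (Hi j); rewrite -(mx _ st (subsetUr _ _)) !inE eqxx.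
Qed.

(* A missed row leaves fewer than n rows used, hence as many columns, so some
   column is missed as well; and symmetrically. *)
Lemma row_met i : exists j, kedge i j \in S.
Proof.
case: (boolP [exists j, kedge i j \in S]) => [/existsP [j ?] | ]; first by exists j.
rewrite negb_exists => /forallP Hi; exfalso.
have sub : [set ij.1 | ij in P] \subset ~: [set i].
  apply/subsetP => a /imsetP [[a' b]]; rewrite !inE /= => h ->.
  by apply: contraTneq h => ->; apply: Hi.
set K := [set ij.2 | ij in P].
have : 0 < #|~: K|.
  have := cardsC K; have := subset_leq_card sub.
  by rewrite cardsC1 !card_ord rows_cols_card -/K; lia.
case/card_gt0P => j; rewrite inE => jK.
apply: (stable_extend (j := j) Hi) => i'; apply: contra jK => h.
by apply/imsetP; exists (i', j); rewrite ?inE.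
Qed.

Lemma col_met j : exists i, kedge i j \in S.
Proof.
case: (boolP [exists i, kedge i j \in S]) => [/existsP [i ?] | ]; first by exists i.
rewrite negb_exists => /forallP Hj; exfalso.
have sub : [set ij.2 | ij in P] \subset ~: [set j].
  apply/subsetP => b /imsetP [[a b']]; rewrite !inE /= => h ->.
  by apply: contraTneq h => ->; apply: Hj.
set R := [set ij.1 | ij in P].
have : 0 < #|~: R|.
  have := cardsC R; have := subset_leq_card sub.
  by rewrite cardsC1 !card_ord -rows_cols_card -/R; lia.
case/card_gt0P => i; rewrite inE => iR.
apply: (stable_extend (i := i) _ Hj) => j'; apply: contra iR => h.
by apply/imsetP; exists (i, j'); rewrite ?inE.
Qed.

End MaxStable.

Lemma line_CIS : CIS r.
Proof.
move=> C S mC mS.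
case: (maxclique_row_or_col mC) => [[i Hi] | [j Hj]].
  by case: (row_met mS i) => j jS; apply/set0Pn; exists (kedge i j); rewrite inE Hi jS.
by case: (col_met mS j) => i iS; apply/set0Pn; exists (kedge i j); rewrite inE Hj iS.
Qed.

End LineCIS.

Lemma clique_simplicial_dec (T : finType) (e : rel T) :
  clique_simplicial e \/ ~ clique_simplicial e.
Proof.
case: (boolP [forall C, maximal_clique e C ==> simplicial_clique e C]) => [/forallP H | H].
  by left => C mC; move: (H C); rewrite mC.
by right => cs; move/negP: H; apply; apply/forallP => C; apply/implyP; apply: cs.
Qed.

Theorem theorem1 (T : finType) (e : rel T) :
  simple_graph e -> connected_graph e -> diamond_free e ->
  (CIS e <->
     [\/ clique_simplicial e,
         exists m n : nat, [/\ 2 <= m, 2 <= n & isomorphic e (Kmn_rel m n)]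
       | exists n : nat, 3 <= n /\ isomorphic e (@line_rel _ (Kmn_rel n n))]).
Proof.
move=> [esym eirr] conn dfree; split.
- move=> cis.
  have [cs | ncs] := clique_simplicial_dec e; first exact: Or31.
  case: (cis_nonsimplicial_structure esym eirr dfree cis conn ncs) => [K | G].
    exact: Or32.
  exact: Or33.
- case => [cs | [m [n [m2 n2 iso]]] | [n [n3 iso]]].
  + exact: clique_simplicial_CIS.
  + by apply: (iso_CIS iso); apply: Kmn_CIS; lia.
  + by apply: (iso_CIS iso); apply: line_CIS; lia.
Qed.
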